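(* Let $\mathcal{C}$ be a small category in which no composite of non-identity morphisms is an identity, and let $M$ be a $k\mathcal{C}$-module such that $[M]$ is a $0$-cocycle in $\mathsf{E}^0(\mathcal{C},k)$, i.e. $\partial_0^*M\cong\partial_1^*M$ as $k\mathcal{E}^{\mathcal{C}}_1$-modules. Then for every square-component $\mathcal{M}$ of $\mathcal{C}$ containing at least two distinct (non-identity) morphisms, $M(u)$ is an isomorphism for every $u\in\mathcal{M}$.
   Context: A $k\mathcal{C}$-module is a functor from $\mathcal{C}$ to finite-dimensional $k$-vector spaces ($k$ a field); $F^*M=M\circ F$. $\mathcal{E}^{\mathcal{C}}_1$ is the category whose objects are the non-identity morphisms $u:a\to b$ of $\mathcal{C}$ (written $[u]$), and whose morphisms $[u]\to[v]$ (with $v:c\to d$) are pairs $(f_0,f_1)$, $f_0:a\to c$, $f_1:b\to d$, with $f_1u=vf_0$. The functors $\partial_0,\partial_1:\mathcal{E}^{\mathcal{C}}_1\to\mathcal{C}$ are $\partial_0[u]=b$, $\partial_0(f_0,f_1)=f_1$ and $\partial_1[u]=a$, $\partial_1(f_0,f_1)=f_0$. (This is the degree-1 part of the semi-simplicial object $\mathcal{E}^{\mathcal{C}}_\bullet$ of non-degenerate strings, whose degree-0 part is $\mathcal{C}$; $\mathsf{E}^0(\mathcal{C},k)$ is the kernel of $d^0=\partial_0^*-\partial_1^*$ on the split Grothendieck group of $k\mathcal{C}$-modules.) A set of non-identity morphisms of $\mathcal{C}$ is a square-component if the full subcategory of $\mathcal{E}^{\mathcal{C}}_1$ on it is a connected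 component of $\mathcal{E}^{\mathcal{C}}_1$. *)

From HB Require Import structures.
From mathcomp Require Import all_boot all_algebra.
From Stdlib Require Import Relations.
Set Implicit Arguments. Unset Strict Implicit. Unset Printing Implicit Defensive.
Import GRing.Theory.
Local Open Scope ring_scope.

Record category := Category {
  Ob : Type;
  Hom : Ob -> Ob -> Type;
  idm : forall a, Hom a a;
  comp : forall a b c, Hom b c -> Hom a b -> Hom a c;
  comp_assoc : forall a b c d (h : Hom c d) (g : Hom b c) (f : Hom a b),
      comp h (comp g f) = comp (comp h g) f;
  comp_id_l : forall a b (f : Hom a b), comp (idm b) f = f;
  comp_id_r : forall a b (f : Hom a b), comp f (idm a) = f
}.
Arguments idm {c} a : rename.
Arguments comp {c} {a b c0} _ _ : rename.

Record arrow (C : category) := Arrow {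
  asrc : Ob C; atgt : Ob C; amor : Hom asrc atgt }.
Arguments Arrow {C asrc atgt} amor.

Definition is_identity (C : category) (u : arrow C) : Prop :=
  exists a : Ob C, u = Arrow (idm a).

Definition no_composite_identity (C : category) : Prop :=
  forall (a b : Ob C) (f : Hom a b) (g : Hom b a),
    ~ is_identity (Arrow f) -> ~ is_identity (Arrow g) -> comp g f <> idm a.

(* A kC-module: a functor C -> finite-dimensional k-vector spaces,
   with k^n identified with row vectors 'rV_n and linear maps with matrices
   acting on the right (so M(g o f) = M f *m M g). *)
Record kmodule (k : fieldType) (C : category) := KModule {
  mdim : Ob C -> nat;
  mmap : forall a b, Hom a b -> 'M[k]_(mdim a, mdim b);
  mmap_id : forall a, mmap (idm a) = 1%:M;
  mmap_comp : forall a b c (g : Hom b c) (f : Hom a b),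
      mmap (comp g f) = mmap f *m mmap g
}.
Arguments mmap {k C} _ {a b} _.
Arguments mdim {k C} _ _.

Definition mx_iso (k : fieldType) m n (A : 'M[k]_(m, n)) : Prop :=
  exists B : 'M[k]_(n, m), A *m B = 1%:M /\ B *m A = 1%:M.

(* Morphisms [u] -> [v] in E_1^C : pairs (f0, f1) with f1 u = v f0. *)
Definition E1_hom (C : category) (u v : arrow C) : Type :=
  { f : Hom (asrc u) (asrc v) * Hom (atgt u) (atgt v)
  | comp f.2 (amor u) = comp (amor v) f.1 }.

(* d_0^* M ~= d_1^* M as kE_1^C-modules: a natural isomorphism
   phi_[u] : M(target u) -> M(source u) for every object [u] of E_1^C
   (values of phi at identity arrows are irrelevant). *)
Definition boundary_iso (k : fieldType) (C : category) (M : kmodule k C) : Prop :=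
  exists phi : forall u : arrow C, 'M[k]_(mdim M (atgt u), mdim M (asrc u)),
    (forall u, ~ is_identity u -> mx_iso (phi u)) /\
    (forall u v, ~ is_identity u -> ~ is_identity v ->
       forall f : E1_hom u v,
         mmap M (sval f).2 *m phi v = phi u *m mmap M (sval f).1).

Definition E1_adj (C : category) (u v : arrow C) : Prop :=
  ~ is_identity u /\ ~ is_identity v /\ (inhabited (E1_hom u v) \/ inhabited (E1_hom v u)).

(* A set S of non-identity morphisms is a square-component: the full
   subcategory of E_1^C on S is a connected component of E_1^C, i.e. it is
   nonempty, connected (zigzags inside S), and closed under morphisms of E_1^C. *)
Definition square_component (C : category) (S : arrow C -> Prop) : Prop :=
  (forall u, S u -> ~ is_identity u) /\
  (exists u, S u) /\
  (forall u v, S u -> S v ->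
     clos_refl_trans (arrow C) (fun x y => S x /\ S y /\ E1_adj x y) u v) /\
  (forall u v, S u -> E1_adj u v -> S v).

(* If x : c -> a and w : a -> b are non-identity morphisms, then w x is not an
   identity, and (1, w) : [x] -> [w x] and (x, 1) : [w x] -> [w] are morphisms
   of E_1. Naturality of the isomorphism phi : d_0^* M ~= d_1^* M at them gives
   M(w) phi_[wx] = phi_[x] and phi_[w] = phi_[wx] M(x), so M(x) and M(w) are
   invertible: any morphism that can be composed non-trivially on either side
   goes to an isomorphism. In a square-component with two elements every u has
   a neighbour v <> u joined to it by a commutative square f1 u = v f0, and
   either a side of the square composes non-trivially with u, or u factors as
   a composite of two non-identity morphisms. *)
From Pilot Require Import Defs.
From mathcomp Require Import all_boot all_algebra.
From Stdlib Require Import Classical Relations.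
Set Implicit Arguments. Unset Strict Implicit. Unset Printing Implicit Defensive.

Local Open Scope ring_scope.

Section InvertibleMatrices.
Variable k : fieldType.

Lemma mx_iso_mul m n p (A : 'M[k]_(m, n)) (B : 'M[k]_(n, p)) :
  mx_iso A -> mx_iso B -> mx_iso (A *m B).
Proof.
move=> [A' [AA' A'A]] [B' [BB' B'B]]; exists (B' *m A'); split.
  by rewrite mulmxA -(mulmxA A) BB' mulmx1 AA'.
by rewrite mulmxA -(mulmxA B') A'A mulmx1 B'B.
Qed.

Lemma mx_iso_of_mulr m n p (X : 'M[k]_(m, n)) (P : 'M[k]_(n, p)) :
  mx_iso P -> mx_iso (X *m P) -> mx_iso X.
Proof.
move=> [P' [PP' P'P]] XP; have -> : X = (X *m P) *m P'.
  by rewrite -mulmxA PP' mulmx1.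
by apply: mx_iso_mul => //; exists P.
Qed.

Lemma mx_iso_of_mull m n p (X : 'M[k]_(n, p)) (P : 'M[k]_(m, n)) :
  mx_iso P -> mx_iso (P *m X) -> mx_iso X.
Proof.
move=> [P' [PP' P'P]] PX; have -> : X = P' *m (P *m X).
  by rewrite mulmxA P'P mul1mx.
by apply: mx_iso_mul => //; exists P.
Qed.

End InvertibleMatrices.

Section Identities.
Variable C : category.

Lemma is_identity_ind (P : forall a b : Ob C, Defs.Hom a b -> Prop)
    (a b : Ob C) (f : Defs.Hom a b) :
  is_identity (Arrow f) -> (forall x, P x x (idm x)) -> P a b f.
Proof.
move=> [x fx] Pid.
change (P (asrc (Arrow f)) (atgt (Arrow f)) (amor (Arrow f))).
by rewrite fx; apply: Pid.
Qed.

Lemma arrow_comp_idl (a b c : Ob C) (g : Defs.Hom b c) (f : Defs.Hom a b) :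
  is_identity (Arrow g) -> Arrow (Defs.comp g f) = Arrow f.
Proof.
move=> g_id; move: a f.
apply: (@is_identity_ind
  (fun b c g => forall a (f : Defs.Hom a b), Arrow (Defs.comp g f) = Arrow f)
  _ _ g g_id) => x a f.
by rewrite comp_id_l.
Qed.

Lemma arrow_comp_idr (a b c : Ob C) (g : Defs.Hom b c) (f : Defs.Hom a b) :
  is_identity (Arrow f) -> Arrow (Defs.comp g f) = Arrow g.
Proof.
move=> f_id; move: c g.
apply: (@is_identity_ind
  (fun a b f => forall c (g : Defs.Hom b c), Arrow (Defs.comp g f) = Arrow g)
  _ _ f f_id) => x c g.
by rewrite comp_id_r.
Qed.

Lemma comp_non_identity (a b c : Ob C) (g : Defs.Hom b c) (f : Defs.Hom a b) :
  no_composite_identity C -> ~ is_identity (Arrow f) -> ~ is_identity (Arrow g) ->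
  ~ is_identity (Arrow (Defs.comp g f)).
Proof.
move=> noC nf ng; move Egf: (Defs.comp g f) => h h_id.
move: b g f nf ng Egf.
apply: (@is_identity_ind (fun a c h => forall b (g : Defs.Hom b c)
  (f : Defs.Hom a b), ~ is_identity (Arrow f) -> ~ is_identity (Arrow g) ->
  Defs.comp g f = h -> False) _ _ _ h_id) => x b g f nf ng.
exact: noC.
Qed.

Lemma clos_rt_first_step_neq (T : Type) (R : relation T) x z :
  clos_refl_trans T R x z -> x <> z -> exists y, R x y /\ y <> x.
Proof.
move=> xz; elim: (clos_rt_rt1n _ _ _ _ xz) => [//|x0 y z0 Rx0y _ IH neq].
case: (classic (y = x0)) => [yx0|]; last by exists y.
by subst y; apply: IH.
Qed.

End Identities.

Section BoundaryIsomorphism.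
Variables (k : fieldType) (C : category) (M : kmodule k C).
Hypotheses (noC : no_composite_identity C) (bM : boundary_iso M).

Definition iso_at (u : arrow C) : Prop := mx_iso (mmap M (amor u)).

Lemma iso_at_composable (a b c : Ob C) (x : Defs.Hom c a) (w : Defs.Hom a b) :
  ~ is_identity (Arrow x) -> ~ is_identity (Arrow w) ->
  iso_at (Arrow x) /\ iso_at (Arrow w).
Proof.
move: bM => [phi [phi_iso phi_nat]] nx nw.
have nwx := comp_non_identity noC nx nw.
have sq_x_wx : Defs.comp (idm c, w).2 (amor (Arrow x)) =
               Defs.comp (amor (Arrow (Defs.comp w x))) (idm c, w).1.
  by rewrite /= comp_id_r.
have sq_wx_w : Defs.comp (x, idm b).2 (amor (Arrow (Defs.comp w x))) =
               Defs.comp (amor (Arrow w)) (x, idm b).1.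
  by rewrite /= comp_id_l.
have /= nat_x_wx := phi_nat _ _ nx nwx (exist _ _ sq_x_wx).
have /= nat_wx_w := phi_nat _ _ nwx nw (exist _ _ sq_wx_w).
rewrite mmap_id mulmx1 in nat_x_wx; rewrite mmap_id mul1mx in nat_wx_w.
split.
  by apply: (mx_iso_of_mull (phi_iso _ nwx)); rewrite -nat_wx_w; apply: phi_iso nw.
by apply: (mx_iso_of_mulr (phi_iso _ nwx)); rewrite nat_x_wx; apply: phi_iso nx.
Qed.

Lemma iso_at_comp (a b c : Ob C) (x : Defs.Hom c a) (w : Defs.Hom a b) :
  ~ is_identity (Arrow x) -> ~ is_identity (Arrow w) ->
  iso_at (Arrow (Defs.comp w x)).
Proof.
move=> nx nw; have [isox isow] := iso_at_composable nx nw.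
by rewrite /iso_at /= mmap_comp; apply: mx_iso_mul.
Qed.

Lemma iso_at_E1_hom (u v : arrow C) :
  ~ is_identity u -> ~ is_identity v -> u <> v -> E1_hom u v ->
  iso_at u /\ iso_at v.
Proof.
case: u v => a b u [c d v] nu nv uv [[f0 f1] /= sq]; split.
- case: (classic (is_identity (Arrow f1))) => [f1_id|]; last first.
    by move=> nf1; case: (iso_at_composable nu nf1).
  have u_vf0 : Arrow u = Arrow (Defs.comp v f0) by rewrite -sq arrow_comp_idl.
  rewrite u_vf0; apply: iso_at_comp nv => f0_id.
  by apply: uv; rewrite u_vf0 arrow_comp_idr.
- case: (classic (is_identity (Arrow f0))) => [f0_id|]; last first.
    by move=> nf0; case: (iso_at_composable nf0 nv).
  have v_f1u : Arrow v = Arrow (Defs.comp f1 u) by rewrite sq arrow_comp_idr.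
  rewrite v_f1u; apply: iso_at_comp nu _ => f1_id.
  by apply: uv; rewrite v_f1u arrow_comp_idl.
Qed.

End BoundaryIsomorphism.

Theorem proposition4p1 (k : fieldType) (C : category) (M : kmodule k C) :
  no_composite_identity C ->
  boundary_iso M ->
  forall S : arrow C -> Prop,
    square_component S ->
    (exists u v, S u /\ S v /\ u <> v) ->
    forall u, S u -> mx_iso (mmap M (amor u)).
Proof.
move=> noC bM S [_ [_ [S_conn _]]] [u0 [v0 [Su0 [Sv0 u0v0]]]] u Su.
have [w [Sw uw]] : exists w, S w /\ u <> w.
  by case: (classic (u = u0)) => [->|]; [exists v0 | exists u0].
have [y [[_ [_ [nu [ny [[uy]|[yu]]]]]] yu_neq]] :=
  clos_rt_first_step_neq (S_conn _ _ Su Sw) uw.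
- by case: (iso_at_E1_hom noC bM nu ny (nesym yu_neq) uy).
- by case: (iso_at_E1_hom noC bM ny nu yu_neq yu).
Qed.
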